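(* Let $v$ be a quadratic Hamiltonian vector field on $\mathbb{C}^2$ with four distinct non-degenerate singular points $p_1,\dots,p_4$. Assume its spectrum is not exceptional, i.e. $\det Dv(p_j)+\det Dv(p_k)\neq0$ for all $j\ne k$. Then $v$ has exactly one twin vector field among all quadratic vector fields, and this twin is $-v$.
   Context: A quadratic vector field is $v=P\,\partial_x+Q\,\partial_y$ with $\deg P,\deg Q\le2$, and it is Hamiltonian if $P_x+Q_y\equiv0$. $Dv$ is the Jacobian matrix of $(P,Q)$. A singular point $p$ is non-degenerate if $\det Dv(p)\ne0$. Two vector fields $v_1,v_2$ with isolated singularities are twin vector fields if $v_1\ne v_2$, they have the same singular set, and at each common singular point $p$ the matrices $Dv_1(p)$ and $Dv_2(p)$ have the same trace and the same determinant. *)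

(* The complex plane C^2 is modelled over an arbitrary
   numClosedFieldType F (algebraically closed field of characteristic 0
   with a conjugation/norm; e.g. algC; C itself is such a field). *)
From HB Require Import structures.
From mathcomp Require Import all_boot all_order all_algebra.
Set Implicit Arguments. Unset Strict Implicit. Unset Printing Implicit Defensive.
Import Order.TTheory GRing.Theory Num.Theory.
Local Open Scope ring_scope.

Record qpoly (F : Type) := QPoly {
  c00 : F; c10 : F; c01 : F; c20 : F; c11 : F; c02 : F }.

Section QPoly.
Variable F : nzRingType.

Definition qeval (p : qpoly F) (x y : F) : F :=
  c00 p + c10 p * x + c01 p * y + c20 p * x ^+ 2 + c11 p * x * y + c02 p * y ^+ 2.

Definition qdx (p : qpoly F) (x y : F) : F :=
  c10 p + 2%:R * c20 p * x + c11 p * y.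
Definition qdy (p : qpoly F) (x y : F) : F :=
  c01 p + c11 p * x + 2%:R * c02 p * y.

Definition qopp (p : qpoly F) : qpoly F :=
  QPoly (- c00 p) (- c10 p) (- c01 p) (- c20 p) (- c11 p) (- c02 p).
End QPoly.

Record qvf (F : Type) := QVF { vP : qpoly F; vQ : qpoly F }.

Section QVF.
Variable F : nzRingType.

Definition qvf_opp (v : qvf F) : qvf F := QVF (qopp (vP v)) (qopp (vQ v)).

Definition hamiltonian (v : qvf F) : Prop :=
  forall x y : F, qdx (vP v) x y + qdy (vQ v) x y = 0.

Definition sing_pt (v : qvf F) (p : F * F) : Prop :=
  qeval (vP v) p.1 p.2 = 0 /\ qeval (vQ v) p.1 p.2 = 0.

Definition vjac (v : qvf F) (p : F * F) : 'M[F]_2 :=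
  \matrix_(i < 2, j < 2)
    (let f := if i == 0 :> nat then vP v else vQ v in
     if j == 0 :> nat then qdx f p.1 p.2 else qdy f p.1 p.2).

Definition nondeg_pt (v : qvf F) (p : F * F) : Prop :=
  \det (vjac v p) != 0.

(* isolated singularities: for (complex) polynomial vector fields in the plane,
   the sing_pt set is an algebraic set, whose points are all isolated iff it
   is finite. *)
Definition isolated_sing (v : qvf F) : Prop :=
  exists s : seq (F * F), forall p, sing_pt v p <-> p \in s.

Definition twin_vf (v1 v2 : qvf F) : Prop :=
  [/\ v1 <> v2, isolated_sing v1, isolated_sing v2,
      (forall p, sing_pt v1 p <-> sing_pt v2 p) &
      (forall p, sing_pt v1 p ->
         \tr (vjac v1 p) = \tr (vjac v2 p) /\ \det (vjac v1 p) = \det (vjac v2 p))].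
End QVF.

(* No three of the p_j are collinear: a conic through three points of a line
   contains the line, so P and Q would both have zero derivative along it and Dv
   would be singular there. Hence a conic through the four points that is singular
   at p_1 vanishes, and every conic through them is a combination of P and Q. A twin w is therefore M v for a
   constant matrix M; comparing determinants at p_1 gives det M = 1, and
   tr D(M v) = tr Dv = 0 at three non-collinear points makes the affine function
   tr D(M v) vanish identically. Unless M is scalar this is a nontrivial linear
   relation among the entries of Dv, which cannot exist: either Dv vanishes at some
   point c, and then det Dv(c + u) = K(u) for a quadratic form K with
   K(u) + K(w) = 0 whenever c + u and c + w are distinct singular points with
   u <> -w, contradicting the spectrum assumption; or the quadratic parts of P and Q
   are proportional, and some combination of P and Q is an affine function vanishing
   at three non-collinear points, contradicting nondegeneracy. So M = -1.
   Conversely -v is a twin; its singular set is exactly {p_j}, because it lies on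
   the line pairs p_1p_2 U p_3p_4 and p_1p_3 U p_2p_4, which are conics through the
   four points. *)

From Pilot Require Import Defs.
From HB Require Import structures.
From mathcomp Require Import all_boot all_algebra.
From mathcomp Require Import ring.
Import GRing.Theory Num.Theory.
Local Open Scope ring_scope.
Set Implicit Arguments. Unset Strict Implicit. Unset Printing Implicit Defensive.

Section QuadraticIdentities.
Variable R : comNzRingType.
Implicit Types (f g P Q : Defs.qpoly R) (a b c d x y : R).

Definition qlin a P b Q : Defs.qpoly R :=
  QPoly (a * c00 P + b * c00 Q) (a * c10 P + b * c10 Q) (a * c01 P + b * c01 Q)
        (a * c20 P + b * c20 Q) (a * c11 P + b * c11 Q) (a * c02 P + b * c02 Q).

Definition qform f u1 u2 : R :=
  c20 f * u1 ^+ 2 + c11 f * u1 * u2 + c02 f * u2 ^+ 2.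

Definition qpolar f e1 e2 h1 h2 : R :=
  2%:R * c20 f * e1 * h1 + c11 f * (e1 * h2 + e2 * h1) + 2%:R * c02 f * e2 * h2.

Definition jdet P Q x y : R := qdx P x y * qdy Q x y - qdy P x y * qdx Q x y.

(* [jdet P Q] at [c + u], when the Jacobian matrix of [(P, Q)] vanishes at [c] *)
Definition jform P Q u1 u2 : R :=
  (2%:R * c20 P * u1 + c11 P * u2) * (c11 Q * u1 + 2%:R * c02 Q * u2) -
  (c11 P * u1 + 2%:R * c02 P * u2) * (2%:R * c20 Q * u1 + c11 Q * u2).

Definition cross (a b c : R * R) : R :=
  (b.1 - a.1) * (c.2 - a.2) - (b.2 - a.2) * (c.1 - a.1).

Definition line_pair (a b c d : R * R) : Defs.qpoly R :=
  let l0 := (b.2 - a.2) * a.1 - (b.1 - a.1) * a.2 in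
  let l1 := - (b.2 - a.2) in let l2 := b.1 - a.1 in
  let m0 := (d.2 - c.2) * c.1 - (d.1 - c.1) * c.2 in
  let m1 := - (d.2 - c.2) in let m2 := d.1 - c.1 in
  QPoly (l0 * m0) (l0 * m1 + l1 * m0) (l0 * m2 + l2 * m0) (l1 * m1) (l1 * m2 + l2 * m1) (l2 * m2).

Lemma qeval_lin a P b Q x y : qeval (qlin a P b Q) x y = a * qeval P x y + b * qeval Q x y.
Proof. by rewrite /qeval /=; ring. Qed.

Lemma qdx_lin a P b Q x y : qdx (qlin a P b Q) x y = a * qdx P x y + b * qdx Q x y.
Proof. by rewrite /qdx /=; ring. Qed.

Lemma qdy_lin a P b Q x y : qdy (qlin a P b Q) x y = a * qdy P x y + b * qdy Q x y.
Proof. by rewrite /qdy /=; ring. Qed.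

Lemma qeval_opp f x y : qeval (qopp f) x y = - qeval f x y.
Proof. by rewrite /qeval /=; ring. Qed.

Lemma qdx_opp f x y : qdx (qopp f) x y = - qdx f x y.
Proof. by rewrite /qdx /=; ring. Qed.

Lemma qdy_opp f x y : qdy (qopp f) x y = - qdy f x y.
Proof. by rewrite /qdy /=; ring. Qed.

Lemma qlin10 P Q : qlin 1 P 0 Q = P.
Proof. by case: P => *; rewrite /qlin /=; congr QPoly; ring. Qed.

Lemma qlin01 P Q : qlin 0 P 1 Q = Q.
Proof. by case: Q => *; rewrite /qlin /=; congr QPoly; ring. Qed.

Lemma qlinN10 P Q : qlin (-1) P 0 Q = qopp P.
Proof. by case: P => *; rewrite /qlin /qopp /=; congr QPoly; ring. Qed.

Lemma qlin0N1 P Q : qlin 0 P (-1) Q = qopp Q.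
Proof. by case: Q => *; rewrite /qlin /qopp /=; congr QPoly; ring. Qed.

Lemma qlin_sub_eq0 P Q : qlin 1 P (-1) Q = QPoly 0 0 0 0 0 0 -> P = Q.
Proof.
case: P Q => ? ? ? ? ? ? [? ? ? ? ? ?] [] /=; rewrite !mul1r !mulN1r.
by move=> /subr0_eq-> /subr0_eq-> /subr0_eq-> /subr0_eq-> /subr0_eq-> /subr0_eq->.
Qed.

Lemma qeval_taylor f a b x y : qeval f x y =
  qeval f a b + qdx f a b * (x - a) + qdy f a b * (y - b) + qform f (x - a) (y - b).
Proof. by rewrite /qeval /qdx /qdy /qform; ring. Qed.

Lemma qdx_taylor f a b x y :
  qdx f x y = qdx f a b + 2%:R * c20 f * (x - a) + c11 f * (y - b).
Proof. by rewrite /qdx; ring. Qed.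

Lemma qdy_taylor f a b x y :
  qdy f x y = qdy f a b + c11 f * (x - a) + 2%:R * c02 f * (y - b).
Proof. by rewrite /qdy; ring. Qed.

(* [q(u)] expanded in the basis [e], [h], cleared of denominators *)
Lemma qform_decomp f e1 e2 h1 h2 u1 u2 :
  (e1 * h2 - e2 * h1) ^+ 2 * qform f u1 u2 =
  (u1 * h2 - u2 * h1) ^+ 2 * qform f e1 e2 +
  (u1 * h2 - u2 * h1) * (e1 * u2 - e2 * u1) * qpolar f e1 e2 h1 h2 +
  (e1 * u2 - e2 * u1) ^+ 2 * qform f h1 h2.
Proof. by rewrite /qform /qpolar; ring. Qed.

Lemma jdet_lin P Q a b c d x y :
  jdet (qlin a P b Q) (qlin c P d Q) x y = (a * d - b * c) * jdet P Q x y.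
Proof. by rewrite /jdet !qdx_lin !qdy_lin; ring. Qed.

Lemma div_lin P Q a b c d x y :
  qdx (qlin a P b Q) x y + qdy (qlin c P d Q) x y =
  (a - d) * qdx P x y + b * qdx Q x y + c * qdy P x y + d * (qdx P x y + qdy Q x y).
Proof. by rewrite qdx_lin qdy_lin; ring. Qed.

Lemma crossC (a b z : R * R) : cross a b z = - cross b a z.
Proof. by rewrite /cross; ring. Qed.

Lemma qeval_line_pair (a b c d z : R * R) :
  qeval (line_pair a b c d) z.1 z.2 = cross a b z * cross c d z.
Proof. by rewrite /qeval /line_pair /cross /=; ring. Qed.

Lemma det_mx2 (A : 'M[R]_2) : \det A = A 0 0 * A 1 1 - A 0 1 * A 1 0.
Proof.
rewrite (expand_det_row _ 0) !big_ord_recl big_ord0 /cofactor !det_mx11 !mxE /=.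
rewrite addr0 expr0 expr1 !mul1r mulN1r mulrN.
by congr (_ * A _ _ - A _ _ * A _ _); apply: val_inj.
Qed.

Lemma tr_mx2 (A : 'M[R]_2) : \tr A = A 0 0 + A 1 1.
Proof.
by rewrite /mxtrace !big_ord_recl big_ord0 addr0; congr (A _ _ + A _ _); apply: val_inj.
Qed.

Lemma det_vjac (v : qvf R) z : \det (vjac v z) = jdet (vP v) (vQ v) z.1 z.2.
Proof. by rewrite det_mx2 !mxE. Qed.

Lemma tr_vjac (v : qvf R) z : \tr (vjac v z) = qdx (vP v) z.1 z.2 + qdy (vQ v) z.1 z.2.
Proof. by rewrite tr_mx2 !mxE. Qed.

Lemma hamiltonian_coef (v : qvf R) : hamiltonian v ->
  [/\ c10 (vP v) + c01 (vQ v) = 0, 2%:R * c20 (vP v) + c11 (vQ v) = 0 &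
      c11 (vP v) + 2%:R * c02 (vQ v) = 0].
Proof.
case: v => P Q /= ham.
have divE x y : qdx P x y + qdy Q x y = (c10 P + c01 Q) + (2%:R * c20 P + c11 Q) * x
    + (c11 P + 2%:R * c02 Q) * y by rewrite /qdx /qdy; ring.
have k0 : c10 P + c01 Q = 0 by move: (ham 0 0); rewrite divE !mulr0 !addr0.
by split=> //; [move: (ham 1 0) | move: (ham 0 1)];
  rewrite divE k0 !mulr0 !mulr1 !add0r ?addr0.
Qed.

Lemma sing_pt_opp (v : qvf R) z : sing_pt (qvf_opp v) z <-> sing_pt v z.
Proof.
rewrite /sing_pt /= !qeval_opp.
split=> -[h1 h2]; last by rewrite h1 h2 oppr0.
by split; apply: oppr_inj; rewrite oppr0.
Qed.

End QuadraticIdentities.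

Section PlaneGeometry.
Variable F : fieldType.
Implicit Types (f g : Defs.qpoly F) (a b c d z : F * F).

Lemma det2_eq0_of_kernel (A B C D e1 e2 : F) :
  A * e1 + B * e2 = 0 -> C * e1 + D * e2 = 0 -> e1 != 0 \/ e2 != 0 ->
  A * D - B * C = 0.
Proof.
move=> h1 h2 [] nz; apply/eqP; rewrite -(mulIr_eq0 _ (mulIf nz)).
- have -> : (A * D - B * C) * e1 = D * (A * e1 + B * e2) - B * (C * e1 + D * e2) by ring.
  by rewrite h1 h2 !mulr0 subr0.
- have -> : (A * D - B * C) * e2 = A * (C * e1 + D * e2) - C * (A * e1 + B * e2) by ring.
  by rewrite h1 h2 !mulr0 subr0.
Qed.

Lemma pair_subr_neq0 a b : a != b -> b.1 - a.1 != 0 \/ b.2 - a.2 != 0.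
Proof.
case: a b => [a1 a2] [b1 b2] /=; rewrite xpair_eqE negb_and !subr_eq0.
by case/orP=> ne; [left | right]; rewrite eq_sym.
Qed.

Lemma cross_eq0_scale a b c : cross a b c = 0 -> a != b ->
  exists l, c = (a.1 + l * (b.1 - a.1), a.2 + l * (b.2 - a.2)).
Proof.
move=> abc /pair_subr_neq0 [] nz.
- exists ((c.1 - a.1) / (b.1 - a.1)).
  have : c.2 - (a.2 + (c.1 - a.1) / (b.1 - a.1) * (b.2 - a.2)) = cross a b c / (b.1 - a.1).
    by rewrite /cross; field.
  move/eqP; rewrite abc mul0r subr_eq0 => /eqP <-.
  by rewrite mulfVK // subrKC; case: c {abc}.
- exists ((c.2 - a.2) / (b.2 - a.2)).
  have : c.1 - (a.1 + (c.2 - a.2) / (b.2 - a.2) * (b.1 - a.1)) = - cross a b c / (b.2 - a.2).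
    by rewrite /cross; field.
  move/eqP; rewrite abc oppr0 mul0r subr_eq0 => /eqP <-.
  by rewrite mulfVK // subrKC; case: c {abc}.
Qed.

Lemma qderiv_line_eq0 f a b l : l != 0 -> l != 1 ->
  qeval f a.1 a.2 = 0 -> qeval f b.1 b.2 = 0 ->
  qeval f (a.1 + l * (b.1 - a.1)) (a.2 + l * (b.2 - a.2)) = 0 ->
  qdx f a.1 a.2 * (b.1 - a.1) + qdy f a.1 a.2 * (b.2 - a.2) = 0.
Proof.
move=> l0 l1 fa fb fc.
have line t : qeval f (a.1 + t * (b.1 - a.1)) (a.2 + t * (b.2 - a.2)) = qeval f a.1 a.2 +
    t * (qdx f a.1 a.2 * (b.1 - a.1) + qdy f a.1 a.2 * (b.2 - a.2)) +
    t ^+ 2 * qform f (b.1 - a.1) (b.2 - a.2).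
  by rewrite /qeval /qdx /qdy /qform; ring.
move: (line 1) (line l); rewrite expr1n !mul1r !subrKC fa fb fc !add0r.
set D := _ * (b.1 - a.1) + _; set q := qform _ _ _ => hb hc.
have : l * (1 - l) * q = l * (D + q) - (l * D + l ^+ 2 * q) by ring.
rewrite -hb -hc mulr0 subr0 => /eqP.
rewrite !mulf_eq0 (negbTE l0) subr_eq0 eq_sym (negbTE l1) /= => /eqP q0.
by rewrite hb q0 addr0.
Qed.

Lemma jdet_collinear_eq0 f g a b c :
  sing_pt (QVF f g) a -> sing_pt (QVF f g) b -> sing_pt (QVF f g) c ->
  a != b -> a != c -> b != c -> cross a b c = 0 -> jdet f g a.1 a.2 = 0.
Proof.
case=> /= fa ga [/= fb gb] [/= fc gc] ab ac bc /cross_eq0_scale /(_ ab) [l ec].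
have l0 : l != 0 by apply: contra ac => /eqP l0; rewrite ec l0 !mul0r !addr0; case: (a).
have l1 : l != 1 by apply: contra bc => /eqP l1; rewrite ec l1 !mul1r !subrKC; case: (b).
have deriv0 h : qeval h a.1 a.2 = 0 -> qeval h b.1 b.2 = 0 -> qeval h c.1 c.2 = 0 ->
    qdx h a.1 a.2 * (b.1 - a.1) + qdy h a.1 a.2 * (b.2 - a.2) = 0.
  by move=> ha hb; rewrite ec; exact: qderiv_line_eq0.
exact: det2_eq0_of_kernel (deriv0 f fa fb fc) (deriv0 g ga gb gc) (pair_subr_neq0 ab).
Qed.

Lemma affine_eq0 (k0 k1 k2 : F) a b c : cross a b c != 0 ->
  k0 + k1 * a.1 + k2 * a.2 = 0 -> k0 + k1 * b.1 + k2 * b.2 = 0 ->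
  k0 + k1 * c.1 + k2 * c.2 = 0 -> [/\ k0 = 0, k1 = 0 & k2 = 0].
Proof.
move=> abc ha hb hc.
have k1E : cross a b c * k1 =
    (c.2 - a.2) * ((k0 + k1 * b.1 + k2 * b.2) - (k0 + k1 * a.1 + k2 * a.2))
  - (b.2 - a.2) * ((k0 + k1 * c.1 + k2 * c.2) - (k0 + k1 * a.1 + k2 * a.2)).
  by rewrite /cross; ring.
have k2E : cross a b c * k2 =
    (b.1 - a.1) * ((k0 + k1 * c.1 + k2 * c.2) - (k0 + k1 * a.1 + k2 * a.2))
  - (c.1 - a.1) * ((k0 + k1 * b.1 + k2 * b.2) - (k0 + k1 * a.1 + k2 * a.2)).
  by rewrite /cross; ring.
rewrite ha hb hc subrr !mulr0 subrr in k1E k2E.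
have z1 : k1 = 0 by apply: (mulfI abc); rewrite mulr0.
have z2 : k2 = 0 by apply: (mulfI abc); rewrite mulr0.
by split=> //; move: ha; rewrite z1 z2 !mul0r !addr0.
Qed.

Lemma cross_eq0_inter a b c z : cross a b z = 0 -> cross a c z = 0 ->
  cross a b c != 0 -> z = a.
Proof.
move=> abz acz abc.
have E1 : cross a b c * (z.1 - a.1) = (c.1 - a.1) * cross a b z - (b.1 - a.1) * cross a c z.
  by rewrite /cross; ring.
have E2 : cross a b c * (z.2 - a.2) = (c.2 - a.2) * cross a b z - (b.2 - a.2) * cross a c z.
  by rewrite /cross; ring.
rewrite abz acz !mulr0 subrr -(mulr0 (cross a b c)) in E1 E2.
move/(mulfI abc)/eqP: E1; move/(mulfI abc)/eqP: E2; rewrite !subr_eq0 => /eqP e2 /eqP e1.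
by case: (z) (a) e1 e2 => ? ? [? ?] /= -> ->.
Qed.

Lemma singular_conic_eq0 g a b c d :
  cross a b c != 0 -> cross a b d != 0 -> cross a c d != 0 ->
  qeval g a.1 a.2 = 0 -> qdx g a.1 a.2 = 0 -> qdy g a.1 a.2 = 0 ->
  qeval g b.1 b.2 = 0 -> qeval g c.1 c.2 = 0 -> qeval g d.1 d.2 = 0 ->
  g = QPoly 0 0 0 0 0 0.
Proof.
move=> abc abd acd ga gx gy gb gc gd.
have qz z : qeval g z.1 z.2 = 0 -> qform g (z.1 - a.1) (z.2 - a.2) = 0.
  by rewrite (qeval_taylor g a.1 a.2) ga gx gy !mul0r !add0r.
have polar0 : qpolar g (b.1 - a.1) (b.2 - a.2) (c.1 - a.1) (c.2 - a.2) = 0.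
  have := qform_decomp g (b.1 - a.1) (b.2 - a.2) (c.1 - a.1) (c.2 - a.2) (d.1 - a.1) (d.2 - a.2).
  rewrite (qz _ gb) (qz _ gc) (qz _ gd) !mulr0 addr0 add0r -/(cross a b d).
  have -> : (d.1 - a.1) * (c.2 - a.2) - (d.2 - a.2) * (c.1 - a.1) = - cross a c d.
    by rewrite /cross; ring.
  by move/esym/eqP; rewrite !mulf_eq0 oppr_eq0 (negbTE acd) (negbTE abd) => /eqP.
have qform0 u1 u2 : qform g u1 u2 = 0.
  have := qform_decomp g (b.1 - a.1) (b.2 - a.2) (c.1 - a.1) (c.2 - a.2) u1 u2.
  rewrite (qz _ gb) (qz _ gc) polar0 !mulr0 !addr0 -/(cross a b c) => /eqP.
  by rewrite mulf_eq0 expf_eq0 (negbTE abc) andbF => /eqP.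
have h20 : c20 g = 0 by rewrite -(qform0 1 0) /qform; ring.
have h02 : c02 g = 0 by rewrite -(qform0 0 1) /qform; ring.
have h11 : c11 g = 0 by rewrite -(qform0 1 1) /qform h20 h02; ring.
have h10 : c10 g = 0 by rewrite -gx /qdx h20 h11; ring.
have h01 : c01 g = 0 by rewrite -gy /qdy h02 h11; ring.
have h00 : c00 g = 0 by rewrite -ga /qeval h10 h01 h20 h11 h02; ring.
by case: g {qz polar0 qform0} ga gx gy gb gc gd h00 h10 h01 h20 h11 h02
  => /= ? ? ? ? ? ? _ _ _ _ _ _ -> -> -> -> -> ->.
Qed.

Lemma det3_eq0_of_kernel (a1 a2 a3 b1 b2 b3 c1 c2 c3 n1 n2 n3 : F) :
  n1 * a1 + n2 * a2 + n3 * a3 = 0 -> n1 * b1 + n2 * b2 + n3 * b3 = 0 ->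
  n1 * c1 + n2 * c2 + n3 * c3 = 0 -> [|| n1 != 0, n2 != 0 | n3 != 0] ->
  a1 * (b2 * c3 - b3 * c2) + a2 * (b3 * c1 - b1 * c3) + a3 * (b1 * c2 - b2 * c1) = 0.
Proof.
move=> ha hb hc nz.
set D := a1 * _ + _ + _.
have E1 : D * n1 = (n1 * a1 + n2 * a2 + n3 * a3) * (b2 * c3 - b3 * c2)
   + (n1 * b1 + n2 * b2 + n3 * b3) * (c2 * a3 - c3 * a2)
   + (n1 * c1 + n2 * c2 + n3 * c3) * (a2 * b3 - a3 * b2) by rewrite /D; ring.
have E2 : D * n2 = (n1 * a1 + n2 * a2 + n3 * a3) * (b3 * c1 - b1 * c3)
   + (n1 * b1 + n2 * b2 + n3 * b3) * (c3 * a1 - c1 * a3)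
   + (n1 * c1 + n2 * c2 + n3 * c3) * (a3 * b1 - a1 * b3) by rewrite /D; ring.
have E3 : D * n3 = (n1 * a1 + n2 * a2 + n3 * a3) * (b1 * c2 - b2 * c1)
   + (n1 * b1 + n2 * b2 + n3 * b3) * (c1 * a2 - c2 * a1)
   + (n1 * c1 + n2 * c2 + n3 * c3) * (a1 * b2 - a2 * b1) by rewrite /D; ring.
rewrite ha hb hc !mul0r !addr0 in E1 E2 E3.
by case/or3P: nz => nz; [move/eqP: E1 | move/eqP: E2 | move/eqP: E3];
  rewrite mulf_eq0 (negbTE nz) orbF => /eqP.
Qed.

Lemma det3_eq0_row_comb (a1 a2 a3 b1 b2 b3 c1 c2 c3 : F) :
  a1 * (b2 * c3 - b3 * c2) + a2 * (b3 * c1 - b1 * c3) + a3 * (b1 * c2 - b2 * c1) = 0 ->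
  [\/ b2 * c3 - b3 * c2 != 0, b3 * c1 - b1 * c3 != 0 | b1 * c2 - b2 * c1 != 0] ->
  exists al be : F,
    [/\ a1 = al * b1 + be * c1, a2 = al * b2 + be * c2 & a3 = al * b3 + be * c3].
Proof.
move=> det0 [] nz.
- exists ((a2 * c3 - a3 * c2) / (b2 * c3 - b3 * c2)), ((b2 * a3 - b3 * a2) / (b2 * c3 - b3 * c2)).
  split; try by field.
  by apply: (mulfI nz); rewrite -[LHS]subr0 -det0; field.
- exists ((a3 * c1 - a1 * c3) / (b3 * c1 - b1 * c3)), ((b3 * a1 - b1 * a3) / (b3 * c1 - b1 * c3)).
  split; try by field.
  by apply: (mulfI nz); rewrite -[LHS]subr0 -det0; field.
- exists ((a1 * c2 - a2 * c1) / (b1 * c2 - b2 * c1)), ((b1 * a2 - b2 * a1) / (b1 * c2 - b2 * c1)).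
  split; try by field.
  by apply: (mulfI nz); rewrite -[LHS]subr0 -det0; field.
Qed.

Lemma pairwise_dependent_kernel (x1 y1 x2 y2 x3 y3 : F) :
  x1 * y2 - x2 * y1 = 0 -> x1 * y3 - x3 * y1 = 0 -> x2 * y3 - x3 * y2 = 0 ->
  exists al be : F, (al != 0 \/ be != 0) /\
    [/\ al * x1 + be * y1 = 0, al * x2 + be * y2 = 0 & al * x3 + be * y3 = 0].
Proof.
move=> d12 d13 d23.
have perp (x y : F) : (x != 0) || (y != 0) -> y != 0 \/ - x != 0.
  by case/orP=> nz; [right; rewrite oppr_eq0 | left].
have [/perp nz1|] := boolP ((x1 != 0) || (y1 != 0)).
  by exists y1, (- x1); split=> //; split; [ring | rewrite -oppr0 -d12 | rewrite -oppr0 -d13]; ring.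
rewrite negb_or !negbK => /andP [/eqP x10 /eqP y10].
have [/perp nz2|] := boolP ((x2 != 0) || (y2 != 0)).
  by exists y2, (- x2); split=> //; split; [rewrite x10 y10 | | rewrite -oppr0 -d23]; ring.
rewrite negb_or !negbK => /andP [/eqP x20 /eqP y20].
have [/perp nz3|] := boolP ((x3 != 0) || (y3 != 0)).
  by exists y3, (- x3); split=> //; split; [rewrite x10 y10 | rewrite x20 y20 |]; ring.
rewrite negb_or !negbK => /andP [/eqP -> /eqP ->].
by exists 1, 0; split; [left; rewrite oner_eq0 | rewrite x10 y10 x20 y20; split; ring].
Qed.

End PlaneGeometry.

Section CharNot2.
Variable F : fieldType.
Hypothesis two_neq0 : (2%:R : F) != 0.
Implicit Types (f g : Defs.qpoly F) (a b c z : F * F).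

Lemma eqrN_eq0 (x : F) : x = - x -> x = 0.
Proof.
by move=> h; apply: (mulfI two_neq0); rewrite mulr0 mulr2n mulrDl mul1r {2}h subrr.
Qed.

(* [2 (q(u) - q(w))] is the derivative of [q] at [u + w] applied to [u - w], and
   vice versa; so the Jacobian form vanishes at [u + w] and at [u - w], and the
   parallelogram law gives the sum at [u] and [w]. *)
Lemma jform_pair_sum f g (u1 u2 w1 w2 : F) :
  qform f u1 u2 = qform f w1 w2 -> qform g u1 u2 = qform g w1 w2 ->
  u1 - w1 != 0 \/ u2 - w2 != 0 -> u1 + w1 != 0 \/ u2 + w2 != 0 ->
  jform f g u1 u2 + jform f g w1 w2 = 0.
Proof.
move=> ef eg nz_diff nz_sum.
have df : 2%:R * (qform f u1 u2 - qform f w1 w2) = 0 by rewrite ef subrr mulr0.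
have dg : 2%:R * (qform g u1 u2 - qform g w1 w2) = 0 by rewrite eg subrr mulr0.
have Jsum : jform f g (u1 + w1) (u2 + w2) = 0.
  by apply: (det2_eq0_of_kernel (e1 := u1 - w1) (e2 := u2 - w2)) => //;
    [rewrite -df | rewrite -dg]; rewrite /qform; ring.
have Jdiff : jform f g (u1 - w1) (u2 - w2) = 0.
  by apply: (det2_eq0_of_kernel (e1 := u1 + w1) (e2 := u2 + w2)) => //;
    [rewrite -df | rewrite -dg]; rewrite /qform; ring.
apply: (mulfI two_neq0); rewrite mulr0.
transitivity (jform f g (u1 + w1) (u2 + w2) + jform f g (u1 - w1) (u2 - w2)).
  by rewrite /jform; ring.
by rewrite Jsum Jdiff addr0.
Qed.

Lemma jdet_sum_eq0 f g c a b :
  qdx f c.1 c.2 = 0 -> qdy f c.1 c.2 = 0 -> qdx g c.1 c.2 = 0 -> qdy g c.1 c.2 = 0 ->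
  sing_pt (QVF f g) a -> sing_pt (QVF f g) b -> a != b ->
  a.1 - c.1 + (b.1 - c.1) != 0 \/ a.2 - c.2 + (b.2 - c.2) != 0 ->
  jdet f g a.1 a.2 + jdet f g b.1 b.2 = 0.
Proof.
move=> fx fy gx gy [/= fa ga] [/= fb gb] ab nz_sum.
have jdetE z : jdet f g z.1 z.2 = jform f g (z.1 - c.1) (z.2 - c.2).
  rewrite /jdet (qdx_taylor f c.1 c.2) (qdy_taylor f c.1 c.2).
  by rewrite (qdx_taylor g c.1 c.2) (qdy_taylor g c.1 c.2) fx fy gx gy /jform; ring.
have qformE h z : qdx h c.1 c.2 = 0 -> qdy h c.1 c.2 = 0 -> qeval h z.1 z.2 = 0 ->
    qform h (z.1 - c.1) (z.2 - c.2) = - qeval h c.1 c.2.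
  move=> hx hy; rewrite (qeval_taylor h c.1 c.2) hx hy !mul0r !addr0 => /eqP.
  by rewrite addrC addr_eq0 => /eqP.
rewrite !jdetE; apply: jform_pair_sum => //.
- by rewrite !qformE.
- by rewrite !qformE.
- have [nz | nz] := pair_subr_neq0 ab; [left | right]; apply: contra nz => /eqP e;
    by rewrite -oppr0 -e; apply/eqP; ring.
Qed.

End CharNot2.

Lemma ord4_cases (j : 'I_4) : [\/ j = 0, j = 1, j = 2 | j = 3].
Proof.
by case: j => -[|[|[|[|//]]]] lt; [constructor 1 | constructor 2 | constructor 3 | constructor 4];
  apply: val_inj.
Qed.

Section FourSingularPoints.
Variables (F : fieldType) (P Q : Defs.qpoly F) (p : 'I_4 -> F * F).
Hypothesis p_inj : injective p.
Hypothesis p_sing : forall j, sing_pt (QVF P Q) (p j).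
Hypothesis p_nondeg : forall j, jdet P Q (p j).1 (p j).2 != 0.

Lemma p_neq i j : i != j -> p i != p j.
Proof. by apply: contra => /eqP /p_inj ->. Qed.

Lemma p_noncollinear i j k : i != j -> i != k -> j != k -> cross (p i) (p j) (p k) != 0.
Proof.
move=> ij ik jk; apply: contra (p_nondeg i) => /eqP ijk; apply/eqP.
exact: jdet_collinear_eq0 (p_sing i) (p_sing j) (p_sing k) (p_neq ij) (p_neq ik) (p_neq jk) ijk.
Qed.

Lemma conic_span C : (forall j, qeval C (p j).1 (p j).2 = 0) ->
  exists a b, C = qlin a P b Q.
Proof.
move=> Cp; pose z := p 0.
set A := qdx P z.1 z.2; set B := qdy P z.1 z.2.
set G := qdx Q z.1 z.2; set D := qdy Q z.1 z.2.
have nd : A * D - B * G != 0 := p_nondeg 0.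
set al := (qdx C z.1 z.2 * D - qdy C z.1 z.2 * G) / (A * D - B * G).
set be := (qdy C z.1 z.2 * A - qdx C z.1 z.2 * B) / (A * D - B * G).
exists al, be; apply: qlin_sub_eq0.
have ev j : qeval (qlin 1 C (-1) (qlin al P be Q)) (p j).1 (p j).2 = 0.
  by rewrite !qeval_lin Cp; case: (p_sing j) => /= -> ->; ring.
apply: (singular_conic_eq0 (a := p 0) (b := p 1) (c := p 2) (d := p 3));
  rewrite ?ev ?p_noncollinear //.
- by rewrite !qdx_lin -/z -/A -/G /al /be; field.
- by rewrite !qdy_lin -/z -/B -/D /al /be; field.
Qed.

Lemma sing_pt_codom z : sing_pt (QVF P Q) z <-> z \in codom p.
Proof.
split; last by case/codomP=> j ->.
case=> /= Pz Qz.
have line_pair_eq0 a b c d : (forall j, cross a b (p j) * cross c d (p j) = 0) ->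
    cross a b z * cross c d z = 0.
  move=> abcd; have [al [be eL]] : exists al be, line_pair a b c d = qlin al P be Q.
    by apply: conic_span => j; rewrite qeval_line_pair.
  by rewrite -qeval_line_pair eL qeval_lin Pz Qz !mulr0 addr0.
have split_pair a b c d : cross a b z * cross c d z = 0 -> cross a b z = 0 \/ cross c d z = 0.
  by move/eqP; rewrite mulf_eq0 => /orP[]/eqP; [left | right].
have swap a b : cross a b z = 0 -> cross b a z = 0 by move=> h; rewrite crossC h oppr0.
have lines0123 : cross (p 0) (p 1) z = 0 \/ cross (p 2) (p 3) z = 0.
  apply/split_pair/line_pair_eq0 => j.
  by case: (ord4_cases j) => ->; rewrite /cross; ring.
have lines0213 : cross (p 0) (p 2) z = 0 \/ cross (p 1) (p 3) z = 0.
  apply/split_pair/line_pair_eq0 => j.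
  by case: (ord4_cases j) => ->; rewrite /cross; ring.
case: lines0123 lines0213 => [h01 | h23] [h02 | h13].
- by rewrite (cross_eq0_inter h01 h02) ?codom_f ?p_noncollinear.
- by rewrite (cross_eq0_inter (swap _ _ h01) h13) ?codom_f ?p_noncollinear.
- by rewrite (cross_eq0_inter h23 (swap _ _ h02)) ?codom_f ?p_noncollinear.
- by rewrite (cross_eq0_inter (swap _ _ h23) (swap _ _ h13)) ?codom_f ?p_noncollinear.
Qed.

Lemma qform_indep al be :
  c20 (qlin al P be Q) = 0 -> c11 (qlin al P be Q) = 0 -> c02 (qlin al P be Q) = 0 ->
  al = 0 /\ be = 0.
Proof.
set R := qlin al P be Q => r20 r11 r02.
have [nz|] := boolP ((al != 0) || (be != 0)); last first.
  by rewrite negb_or !negbK => /andP[/eqP -> /eqP ->].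
exfalso; move/eqP: (p_nondeg 0); apply.
have affR j : c00 R + c10 R * (p j).1 + c01 R * (p j).2 = 0.
  have := qeval_lin al P be Q (p j).1 (p j).2.
  case: (p_sing j) => /= -> ->; rewrite !mulr0 addr0 /qeval -/R r20 r11 r02.
  by rewrite !mul0r !addr0.
have [_ r10 r01] := affine_eq0 (p_noncollinear (i := 0) (j := 1) (k := 2) isT isT isT)
  (affR 0) (affR 1) (affR 2).
have kx : qdx P (p 0).1 (p 0).2 * al + qdx Q (p 0).1 (p 0).2 * be = 0.
  by rewrite mulrC (mulrC _ be) -qdx_lin -/R /qdx r10 r20 r11 !mulr0 !mul0r !addr0.
have ky : qdy P (p 0).1 (p 0).2 * al + qdy Q (p 0).1 (p 0).2 * be = 0.
  by rewrite mulrC (mulrC _ be) -qdy_lin -/R /qdy r01 r11 r02 !mulr0 !mul0r !addr0.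
by rewrite /jdet (mulrC (qdy P _ _)); apply: det2_eq0_of_kernel kx ky _; apply/orP.
Qed.

Hypothesis two_neq0 : (2%:R : F) != 0.
Hypothesis ham : hamiltonian (QVF P Q).
Hypothesis p_nonexc : forall j k, j != k ->
  jdet P Q (p j).1 (p j).2 + jdet P Q (p k).1 (p k).2 != 0.

Lemma jac_neq0 c : ~ [/\ qdx P c.1 c.2 = 0, qdy P c.1 c.2 = 0 & qdx Q c.1 c.2 = 0].
Proof.
case=> Px Py Qx.
have Qy : qdy Q c.1 c.2 = 0 by move: (ham c.1 c.2); rewrite /= Px add0r.
have sum0 j k := jdet_sum_eq0 two_neq0 Px Py Qx Qy (p_sing j) (p_sing k).
have [s01 | /norP[/negPn/eqP s1 /negPn/eqP s2]] :=
  boolP (((p 0).1 - c.1 + ((p 1).1 - c.1) != 0) || ((p 0).2 - c.2 + ((p 1).2 - c.2) != 0)).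
  move/eqP: (p_nonexc (j := 0) (k := 1) isT); apply.
  by apply: sum0; [exact: p_neq | apply/orP].
move/eqP: (p_nonexc (j := 0) (k := 2) isT); apply; apply: sum0; first exact: p_neq.
have [d1 | d2] := pair_subr_neq0 (p_neq (i := 1) (j := 2) isT); [left | right].
- have -> : (p 0).1 - c.1 + ((p 2).1 - c.1) =
      (p 2).1 - (p 1).1 + ((p 0).1 - c.1 + ((p 1).1 - c.1)) by ring.
  by rewrite s1 addr0.
- have -> : (p 0).2 - c.2 + ((p 2).2 - c.2) =
      (p 2).2 - (p 1).2 + ((p 0).2 - c.2 + ((p 1).2 - c.2)) by ring.
  by rewrite s2 addr0.
Qed.

Lemma jac_entries_indep n1 n2 n3 :
  (forall j, n1 * qdx P (p j).1 (p j).2 + n2 * qdx Q (p j).1 (p j).2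
             + n3 * qdy P (p j).1 (p j).2 = 0) ->
  [/\ n1 = 0, n2 = 0 & n3 = 0].
Proof.
move=> hj.
have [k0 k1 k2] : [/\ n1 * c10 P + n2 * c10 Q + n3 * c01 P = 0,
    n1 * (2%:R * c20 P) + n2 * (2%:R * c20 Q) + n3 * c11 P = 0 &
    n1 * c11 P + n2 * c11 Q + n3 * (2%:R * c02 P) = 0].
  apply: (affine_eq0 (p_noncollinear (i := 0) (j := 1) (k := 2) isT isT isT));
    [rewrite -(hj 0) | rewrite -(hj 1) | rewrite -(hj 2)]; rewrite /qdx /qdy; ring.
have [nz|] := boolP [|| n1 != 0, n2 != 0 | n3 != 0]; last first.
  by rewrite !negb_or !negbK => /and3P[/eqP -> /eqP -> /eqP ->].
(* The coefficient rows of the affine functions [qdx P], [qdx Q], [qdy P] are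
   dependent. If their linear parts have rank 2, the Jacobian matrix vanishes at
   some point; otherwise, by the Hamiltonian relations, the quadratic parts of
   [P] and [Q] are proportional. *)
exfalso; have det0 := det3_eq0_of_kernel k0 k1 k2 nz.
move: (hamiltonian_coef ham) => /= [H0 H1 H2].
have [minor_nz|] := boolP [|| 2%:R * c20 Q * (2%:R * c02 P) - c11 P * c11 Q != 0,
  c11 P * c11 P - 2%:R * c20 P * (2%:R * c02 P) != 0 |
  2%:R * c20 P * c11 Q - 2%:R * c20 Q * c11 P != 0].
  have [al [be [e0 e1 e2]]] := det3_eq0_row_comb det0 (or3P minor_nz).
  by apply: (jac_neq0 (c := (- al, - be))); split; rewrite /qdx /qdy /= ?e0 ?e1 ?e2; ring.
rewrite !negb_or !negbK => /and3P[/eqP X1 /eqP X2 /eqP X3].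
have Y3 : c20 P * c11 Q - c11 P * c20 Q = 0.
  by apply: (mulfI two_neq0); rewrite mulr0 -X3; ring.
have Y2 : c20 P * c02 Q - c02 P * c20 Q = 0.
  apply: (mulfI (mulf_neq0 two_neq0 two_neq0)); rewrite mulr0.
  transitivity (2%:R * c20 P * (c11 P + 2%:R * c02 Q) - c11 P * (2%:R * c20 P + c11 Q)
    - (2%:R * c20 Q * (2%:R * c02 P) - c11 P * c11 Q)); first by ring.
  by rewrite H1 H2 X1 !mulr0 !subr0.
have Y1 : c11 P * c02 Q - c02 P * c11 Q = 0.
  apply: (mulfI two_neq0); rewrite mulr0.
  transitivity (c11 P * (c11 P + 2%:R * c02 Q) - 2%:R * c02 P * (2%:R * c20 P + c11 Q)
    - (c11 P * c11 P - 2%:R * c20 P * (2%:R * c02 P))); first by ring.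
  by rewrite H1 H2 X2 !mulr0 !subr0.
have [al [be [nz_ab [d20 d11 d02]]]] := pairwise_dependent_kernel Y3 Y2 Y1.
have [al0 be0] := qform_indep d20 d11 d02.
by move: nz_ab; rewrite al0 be0 eqxx; case.
Qed.

Lemma twin_eq_opp w : twin_vf (QVF P Q) w -> w = qvf_opp (QVF P Q).
Proof.
case: w => Pw Qw [w_neq _ _ w_sing w_jac].
have w_sing_p j := (w_sing (p j)).1 (p_sing j).
have [a [b /= ePw]] := conic_span (fun j => (w_sing_p j).1).
have [c [d /= eQw]] := conic_span (fun j => (w_sing_p j).2).
subst Pw Qw.
have detM : a * d - b * c = 1.
  apply: (mulIf (p_nondeg 0)); rewrite mul1r -jdet_lin.
  by have [_] := w_jac _ (p_sing 0); rewrite !det_vjac.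
have [ad b0 c0] : [/\ a - d = 0, b = 0 & c = 0].
  apply: jac_entries_indep => j; have [tr_eq _] := w_jac _ (p_sing j).
  move: tr_eq; rewrite !tr_vjac /= div_lin (ham (p j).1 (p j).2) mulr0 addr0.
  by move/esym.
have da : d = a by apply/eqP; rewrite eq_sym -subr_eq0 ad.
subst b c d; move/eqP: detM; rewrite mulr0 subr0 -expr2 sqrf_eq1 => /orP[]/eqP ea; subst a.
  by exfalso; apply: w_neq; rewrite qlin10 qlin01.
by rewrite qlinN10 qlin0N1.
Qed.

Lemma opp_twin : twin_vf (QVF P Q) (qvf_opp (QVF P Q)).
Proof.
split=> [/(congr1 (@vP _)) /= eP | | | z | z _].
- have Px : qdx P (p 0).1 (p 0).2 = 0 by apply: (eqrN_eq0 two_neq0); rewrite {1}eP qdx_opp.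
  have Py : qdy P (p 0).1 (p 0).2 = 0 by apply: (eqrN_eq0 two_neq0); rewrite {1}eP qdy_opp.
  by move: (p_nondeg 0); rewrite /jdet Px Py !mul0r subrr eqxx.
- by exists (codom p) => z; exact: sing_pt_codom.
- by exists (codom p) => z; rewrite sing_pt_opp; exact: sing_pt_codom.
- by rewrite sing_pt_opp.
rewrite !tr_vjac !det_vjac /= /jdet !qdx_opp !qdy_opp -opprD (ham z.1 z.2) oppr0.
by split=> //; ring.
Qed.

End FourSingularPoints.

Unset Implicit Arguments.
Theorem theorem5p1 (F : numClosedFieldType) (v : qvf F) (p : 'I_4 -> F * F) :
  hamiltonian v ->
  injective p ->
  (forall j, sing_pt v (p j)) ->
  (forall j, nondeg_pt v (p j)) ->
  (forall j k : 'I_4, j != k -> \det (vjac v (p j)) + \det (vjac v (p k)) != 0) ->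
  forall w : qvf F, twin_vf v w <-> w = qvf_opp v.
Proof.
case: v => P Q ham p_inj p_sing p_nondeg p_nonexc w.
have two_neq0 : (2%:R : F) != 0 by rewrite pnatr_eq0.
have nondeg j : jdet P Q (p j).1 (p j).2 != 0 by have := p_nondeg j; rewrite /nondeg_pt det_vjac.
have nonexc j k : j != k -> jdet P Q (p j).1 (p j).2 + jdet P Q (p k).1 (p k).2 != 0.
  by move=> jk; have := p_nonexc j k jk; rewrite !det_vjac.
split=> [tw | ->]; first exact: (twin_eq_opp p_inj p_sing nondeg two_neq0 ham nonexc tw).
exact: (opp_twin p_inj p_sing nondeg two_neq0 ham).
Qed.
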